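(* Let $\lambda_1,\lambda_2,\sigma_1,\sigma_2\in\mathbb{C}^*$ and $\eta_1,\eta_2\in\mathbb{C}$ with $\lambda_1\neq\lambda_2$. Then the $\mathcal{G}$-submodule of $\Omega(\lambda_1,\eta_1,\sigma_1,0)\otimes\Omega(\lambda_2,\eta_2,\sigma_2,0)$ generated by $1\otimes 1$ is the whole module $\Omega(\lambda_1,\eta_1,\sigma_1,0)\otimes\Omega(\lambda_2,\eta_2,\sigma_2,0)$.
   Context: The planar Galilean conformal algebra $\mathcal{G}$ is the complex Lie algebra with basis $\{L_m,H_m,I_m,J_m\mid m\in\mathbb{Z}\}$ and brackets $[L_m,L_n]=(n-m)L_{m+n}$, $[L_m,H_n]=nH_{m+n}$, $[L_m,I_n]=(n-m)I_{m+n}$, $[L_m,J_n]=(n-m)J_{m+n}$, $[H_m,I_n]=I_{m+n}$, $[H_m,J_n]=-J_{m+n}$, and $[H_m,H_n]=[I_m,I_n]=[J_m,J_n]=[I_m,J_n]=0$ for all $m,n\in\mathbb{Z}$. For $\lambda,\sigma\in\mathbb{C}^*$, $\eta\in\mathbb{C}$, the module $\Omega(\lambda,\eta,\sigma,0)$ is a polynomial algebra $\mathbb{C}[X,Y]$ with $L_m f(X,Y)=\lambda^m(Y-mX+m\eta)f(X,Y-m)$, $H_m f(X,Y)=\lambda^m X f(X,Y-m)$, $I_m f(X,Y)=\lambda^m\sigma f(X-1,Y-m)$, $J_m f(X,Y)=0$. The tensor product of $\mathcal{G}$-modules has action $x(v\otimes w)=xv\otimes w+v\otimes xw$. *)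

From mathcomp Require Import all_boot all_order all_algebra.
From mathcomp Require Import reals.
From mathcomp.real_closed Require Import complex.
From mathcomp Require Import mpoly.

Set Implicit Arguments.
Unset Strict Implicit.
Unset Printing Implicit Defensive.
Import GRing.Theory.
Local Open Scope ring_scope.

(* The four families of basis elements of the planar Galilean conformal
   algebra: L_m, H_m, I_m, J_m (m : int). *)
Inductive Ggen := GL | GH | GI | GJ.

Section TensorOmega.
Variable R : realType.
Local Notation C := (R[i]).

(* Model of Omega(l1,e1,s1,0) (x) Omega(l2,e2,s2,0):
   C[X,Y] (x) C[X,Y] = C[X1,Y1,X2,Y2] via f (x) g |-> f(X1,Y1) g(X2,Y2),
   with variables 'X_0 = X1, 'X_1 = Y1, 'X_2 = X2, 'X_3 = Y2. *)
Definition TOmega := {mpoly C[4]}.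

Definition shift1 (a b : C) (f : TOmega) : TOmega :=
  f \mPo [tuple ('X_0 - a%:MP : TOmega); 'X_1 - b%:MP; 'X_2; 'X_3].
Definition shift2 (a b : C) (f : TOmega) : TOmega :=
  f \mPo [tuple ('X_0 : TOmega); 'X_1; 'X_2 - a%:MP; 'X_3 - b%:MP].

Variables (l1 e1 s1 l2 e2 s2 : C).

(* Action of x_m on the tensor product: x (f (x) g) = x f (x) g + f (x) x g,
   where on Omega(l,e,s,0):
     L_m f = l^m (Y - m X + m e) f(X, Y - m)
     H_m f = l^m X f(X, Y - m)
     I_m f = l^m s f(X - 1, Y - m)
     J_m f = 0. *)
Definition tact (x : Ggen) (m : int) (f : TOmega) : TOmega :=
  let mC : C := m%:~R in
  match x with
  | GL => l1 ^ m *: (('X_1 - mC *: 'X_0 + (mC * e1)%:MP) * shift1 0 mC f)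
        + l2 ^ m *: (('X_3 - mC *: 'X_2 + (mC * e2)%:MP) * shift2 0 mC f)
  | GH => l1 ^ m *: ('X_0 * shift1 0 mC f) + l2 ^ m *: ('X_2 * shift2 0 mC f)
  | GI => (l1 ^ m * s1) *: shift1 1 mC f + (l2 ^ m * s2) *: shift2 1 mC f
  | GJ => 0
  end.

Definition is_Gsubmodule (W : TOmega -> Prop) : Prop :=
  [/\ W 0,
      (forall (a : C) (u v : TOmega), W u -> W v -> W (a *: u + v)) &
      (forall (x : Ggen) (m : int) (u : TOmega), W u -> W (tact x m u))].

Definition in_generated_submodule (w v : TOmega) : Prop :=
  forall W : TOmega -> Prop, is_Gsubmodule W -> W w -> W v.

Definition tens (f g : {mpoly C[2]}) : TOmega :=
  (f \mPo [tuple ('X_0 : TOmega); 'X_1]) * (g \mPo [tuple ('X_2 : TOmega); 'X_3]).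

End TensorOmega.

(** Since [H_m] and [L_m] act on the two tensor factors with the distinct
    weights [l1^m] and [l2^m], comparing their actions for [m = 0] and [m = 1]
    separates the two summands: a submodule [W] containing a monomial [u] also
    contains [X1 u] and [X2 u] (from [H_0], [H_1]) and, as long as the
    monomials of lower degree in [Y1, Y2] are already in [W], also [Y1 u] and
    [Y2 u] (from [L_0], [L_1]).  Starting from [1 (x) 1], an induction first on
    the [X]-degree and then on the [Y]-degree puts every monomial, hence every
    polynomial, into [W]. *)

From mathcomp Require Import all_boot all_order all_algebra.
From mathcomp Require Import reals.
From mathcomp.real_closed Require Import complex.
From mathcomp Require Import mpoly.
From mathcomp Require Import ring zify.
Import GRing.Theory.
Local Open Scope ring_scope.

Section Monomials.
Variable R : realType.
Local Notation C := (R[i]).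
Local Notation T := (TOmega R).

Definition monomial (a b c d : nat) : T :=
  'X_0 ^+ a * ('X_1 ^+ b * ('X_2 ^+ c * 'X_3 ^+ d)).

Lemma mpolyX_monomial (m : 'X_{1..4}) :
  'X_[m] = monomial (m 0) (m 1) (m 2) (m 3).
Proof.
have e1 : lift ord0 ord0 = 1 :> 'I_4 by apply: val_inj.
have e2 : lift ord0 (lift ord0 ord0) = 2 :> 'I_4 by apply: val_inj.
have e3 : lift ord0 (lift ord0 (lift ord0 ord0)) = 3 :> 'I_4 by apply: val_inj.
by rewrite mpolyXE_id !big_ord_recl big_ord0 mulr1 e3 e2 e1.
Qed.

Lemma monomial0 : monomial 0 0 0 0 = 1.
Proof. by rewrite /monomial !expr0 !mulr1. Qed.

Lemma mulX0_monomial a b c d : 'X_0 * monomial a b c d = monomial a.+1 b c d.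
Proof. by rewrite /monomial exprS mulrA. Qed.

Lemma mulX1_monomial a b c d : 'X_1 * monomial a b c d = monomial a b.+1 c d.
Proof. by rewrite /monomial exprS; ring. Qed.

Lemma mulX2_monomial a b c d : 'X_2 * monomial a b c d = monomial a b c.+1 d.
Proof. by rewrite /monomial exprS; ring. Qed.

Lemma mulX3_monomial a b c d : 'X_3 * monomial a b c d = monomial a b c d.+1.
Proof. by rewrite /monomial exprS; ring. Qed.

Lemma expr_subX (j : 'I_4) (t : C) b : ('X_j - t%:MP : T) ^+ b =
  'X_j ^+ b + \sum_(i < b) ((- t) ^+ (b - i) *+ 'C(b, i)) *: 'X_j ^+ i.
Proof.
rewrite addrC exprDn big_ord_recr /= subnn expr0 mul1r binn mulr1n addrC.
congr (_ + _); apply: eq_bigr => i _.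
by rewrite -mul_mpolyC rmorphMn rmorphXn raddfN /= mulrnAl.
Qed.

Lemma shift1_monomial (t : C) a b c d : shift1 0 t (monomial a b c d) =
  monomial a b c d + \sum_(i < b) ((- t) ^+ (b - i) *+ 'C(b, i)) *: monomial a i c d.
Proof.
rewrite /shift1 /monomial !rmorphM !rmorphXn /= !comp_mpolyXU /= mpolyC0 subr0.
rewrite (expr_subX 1) mulrDl mulrDr; congr (_ + _).
rewrite mulr_suml mulr_sumr; apply: eq_bigr => i _.
by rewrite -scalerAl -scalerAr.
Qed.

Lemma shift2_monomial (t : C) a b c d : shift2 0 t (monomial a b c d) =
  monomial a b c d + \sum_(i < d) ((- t) ^+ (d - i) *+ 'C(d, i)) *: monomial a b c i.
Proof.
rewrite /shift2 /monomial !rmorphM !rmorphXn /= !comp_mpolyXU /= mpolyC0 subr0.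
rewrite (expr_subX 3) !mulrDr; congr (_ + _).
rewrite !mulr_sumr; apply: eq_bigr => i _.
by rewrite -!scalerAr.
Qed.

Lemma tuple_mpolyX : [tuple ('X_0 : T); 'X_1; 'X_2; 'X_3] = [tuple 'X_i | i < 4].
Proof.
apply: eq_from_tnth => i; rewrite tnth_map tnth_ord_tuple.
by case: i => -[|[|[|[|//]]]] ? /=; congr (mpolyX _ (mnm1 _)); apply: val_inj.
Qed.

Lemma shift1_id (f : T) : shift1 0 0 f = f.
Proof. by rewrite /shift1 mpolyC0 !subr0 tuple_mpolyX comp_mpoly_id. Qed.

Lemma shift2_id (f : T) : shift2 0 0 f = f.
Proof. by rewrite /shift2 mpolyC0 !subr0 tuple_mpolyX comp_mpoly_id. Qed.

Lemma tens11 : tens 1 1 = 1 :> T.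
Proof. by rewrite /tens !rmorph1 mulr1. Qed.

End Monomials.

Arguments monomial {R}.

Section Action.
Variable R : realType.
Local Notation C := (R[i]).
Variables l1 e1 s1 l2 e2 s2 : C.
Local Notation act := (tact l1 e1 s1 l2 e2 s2).

Lemma tactH0 f : act GH 0 f = 'X_0 * f + 'X_2 * f.
Proof. by rewrite /tact shift1_id shift2_id !expr0z !scale1r. Qed.

Lemma tactH1 f :
  act GH 1 f = l1 *: ('X_0 * shift1 0 1 f) + l2 *: ('X_2 * shift2 0 1 f).
Proof. by rewrite /tact !expr1z. Qed.

Lemma tactL0 f : act GL 0 f = 'X_1 * f + 'X_3 * f.
Proof.
rewrite /tact shift1_id shift2_id !expr0z !scale1r.
by rewrite !mul0r !scale0r mpolyC0 !subr0 !addr0.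
Qed.

Lemma tactL1 f : act GL 1 f =
  l1 *: (('X_1 - 'X_0 + e1%:MP) * shift1 0 1 f)
  + l2 *: (('X_3 - 'X_2 + e2%:MP) * shift2 0 1 f).
Proof. by rewrite /tact !expr1z /= !scale1r !mul1r. Qed.

End Action.

Section Submodule.
Variable R : realType.
Local Notation C := (R[i]).
Local Notation T := (TOmega R).
Variables (l1 e1 s1 l2 e2 s2 : C) (W : T -> Prop).
Hypothesis W_sub : is_Gsubmodule l1 e1 s1 l2 e2 s2 W.

Lemma Gsub0 : W 0. Proof. by case: W_sub. Qed.

Lemma GsubZD a u v : W u -> W v -> W (a *: u + v).
Proof. by case: W_sub => _ + _; apply. Qed.

Lemma Gsub_act x m {u} : W u -> W (tact l1 e1 s1 l2 e2 s2 x m u).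
Proof. by case: W_sub => _ _; apply. Qed.

Lemma GsubZ a {u} : W u -> W (a *: u).
Proof. by move=> Wu; rewrite -[_ *: _]addr0; apply: GsubZD Wu Gsub0. Qed.

Lemma GsubD u v : W u -> W v -> W (u + v).
Proof. by move=> Wu Wv; rewrite -[u]scale1r; apply: GsubZD. Qed.

Lemma GsubB u v : W u -> W v -> W (u - v).
Proof. by move=> Wu Wv; rewrite -scaleN1r addrC; apply: GsubZD. Qed.

Lemma GsubMC a u : W u -> W (a%:MP * u).
Proof. by rewrite mul_mpolyC; apply: GsubZ. Qed.

Lemma Gsub_sumZ k (a : 'I_k -> C) (F : 'I_k -> T) :
  (forall i, W (F i)) -> W (\sum_(i < k) a i *: F i).
Proof. by move=> WF; apply: (big_ind W Gsub0 GsubD) => i _; apply: GsubZ. Qed.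

Hypothesis l1_neq_l2 : l1 != l2.

(* Separation of the two tensor factors through [l1 != l2], up to errors
   [A' - A] and [B' - B] already known to lie in [W]. *)
Lemma Gsub_split {A B A' B' : T} : W (A' - A) -> W (B' - B) ->
  W (A + B) -> W (l1 *: A' + l2 *: B') -> W A /\ W B.
Proof.
move=> WA' WB' WAB WAB'.
have WlAB : W (l1 *: A + l2 *: B).
  have -> : l1 *: A + l2 *: B =
      l1 *: A' + l2 *: B' - (l1 *: (A' - A) + l2 *: (B' - B)).
    by rewrite !scalerBr; ring.
  by apply: GsubB => //; apply: GsubZD => //; apply: GsubZ.
have WdA : W ((l1 - l2) *: A).
  have <- : l1 *: A + l2 *: B - l2 *: (A + B) = (l1 - l2) *: A.
    by rewrite scalerDr opprD addrACA subrr addr0 scalerBl.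
  by apply: GsubB => //; apply: GsubZ.
have WA : W A.
  by have := GsubZ (l1 - l2)^-1 WdA; rewrite scalerA mulVf ?scale1r // subr_eq0.
split=> //; rewrite -[B](addKr A) addrC; exact: GsubB.
Qed.

Hypothesis W1 : W 1.

Lemma Gsub_monomial_Yfree a c : W (monomial a 0 c 0).
Proof.
have mulX02 a' c' : W (monomial a' 0 c' 0) ->
    W (monomial a'.+1 0 c' 0) /\ W (monomial a' 0 c'.+1 0).
  move=> Wu; have Wsubrr (u : T) : W (u - u) by rewrite subrr; exact: Gsub0.
  apply: (Gsub_split (Wsubrr _) (Wsubrr _)).
    by have := Gsub_act GH 0 Wu; rewrite tactH0 mulX0_monomial mulX2_monomial.
  have := Gsub_act GH 1 Wu.
  rewrite tactH1 shift1_monomial shift2_monomial !big_ord0 !addr0.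
  by rewrite mulX0_monomial mulX2_monomial.
elim: a c => [|a IHa] c; last exact: (mulX02 _ _ (IHa c)).1.
elim: c => [|c IHc]; first by rewrite monomial0.
exact: (mulX02 _ _ IHc).2.
Qed.

Definition contains_Ydeg n :=
  forall a b c d, (b + d <= n)%N -> W (monomial a b c d).

Lemma shift1_correction (e : C) {n a b c d} : contains_Ydeg n -> (b + d <= n)%N ->
  W (('X_1 - 'X_0 + e%:MP) * shift1 0 1 (monomial a b c d) - monomial a b.+1 c d).
Proof.
move=> low bd; rewrite shift1_monomial -mulX1_monomial.
set u := monomial a b c d; set G := \sum_(i < b) _.
have WG (q : T) : (forall i, (i < b)%N -> W (q * monomial a i c d)) -> W (q * G).
  move=> Wq; rewrite mulr_sumr; under eq_bigr do rewrite -scalerAr.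
  by apply: Gsub_sumZ => i; apply: Wq.
have -> : ('X_1 - 'X_0 + e%:MP) * (u + G) - 'X_1 * u =
    'X_1 * G - 'X_0 * u - 'X_0 * G + e%:MP * u + e%:MP * G by ring.
apply: GsubD; [apply: GsubD; [apply: GsubB; [apply: GsubB|]|]|].
- by apply: WG => i ib; rewrite mulX1_monomial; apply: low; lia.
- by rewrite mulX0_monomial; apply: low.
- by apply: WG => i ib; rewrite mulX0_monomial; apply: low; lia.
- by apply: GsubMC; apply: low.
- by apply: WG => i ib; apply: GsubMC; apply: low; lia.
Qed.

Lemma shift2_correction (e : C) {n a b c d} : contains_Ydeg n -> (b + d <= n)%N ->
  W (('X_3 - 'X_2 + e%:MP) * shift2 0 1 (monomial a b c d) - monomial a b c d.+1).
Proof.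
move=> low bd; rewrite shift2_monomial -mulX3_monomial.
set u := monomial a b c d; set G := \sum_(i < d) _.
have WG (q : T) : (forall i, (i < d)%N -> W (q * monomial a b c i)) -> W (q * G).
  move=> Wq; rewrite mulr_sumr; under eq_bigr do rewrite -scalerAr.
  by apply: Gsub_sumZ => i; apply: Wq.
have -> : ('X_3 - 'X_2 + e%:MP) * (u + G) - 'X_3 * u =
    'X_3 * G - 'X_2 * u - 'X_2 * G + e%:MP * u + e%:MP * G by ring.
apply: GsubD; [apply: GsubD; [apply: GsubB; [apply: GsubB|]|]|].
- by apply: WG => i id; rewrite mulX3_monomial; apply: low; lia.
- by rewrite mulX2_monomial; apply: low.
- by apply: WG => i id; rewrite mulX2_monomial; apply: low; lia.
- by apply: GsubMC; apply: low.
- by apply: WG => i id; apply: GsubMC; apply: low; lia.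
Qed.

Lemma contains_YdegS n : contains_Ydeg n -> contains_Ydeg n.+1.
Proof.
move=> low.
have mulY a b c d : (b + d <= n)%N ->
    W (monomial a b.+1 c d) /\ W (monomial a b c d.+1).
  move=> bd; have Wu := low a b c d bd.
  apply: (Gsub_split (shift1_correction e1 low bd) (shift2_correction e2 low bd)).
    by have := Gsub_act GL 0 Wu; rewrite tactL0 mulX1_monomial mulX3_monomial.
  by have := Gsub_act GL 1 Wu; rewrite tactL1.
move=> a [|b] c d bd; last by apply: (mulY a b c d _).1; lia.
case: d bd => [|d] bd; first exact: low.
by apply: (mulY a 0 c d _).2; lia.
Qed.

Lemma Gsub_monomial a b c d : W (monomial a b c d).
Proof.
suff low n : contains_Ydeg n by exact: (low (b + d)).
elim: n => [|n /contains_YdegS //] a' b' c' d'.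
by rewrite leqn0 addn_eq0 => /andP[/eqP-> /eqP->]; apply: Gsub_monomial_Yfree.
Qed.

Lemma Gsub_all v : W v.
Proof.
rewrite (mpolyE v); apply: (big_ind W Gsub0 GsubD) => m _.
by apply: GsubZ; rewrite mpolyX_monomial; apply: Gsub_monomial.
Qed.

End Submodule.

Theorem proposition4p3 (R : realType) (l1 l2 s1 s2 e1 e2 : R[i]) :
  l1 != 0 -> l2 != 0 -> s1 != 0 -> s2 != 0 -> l1 != l2 ->
  forall v : TOmega R,
    in_generated_submodule l1 e1 s1 l2 e2 s2 (tens 1 1) v.
Proof.
move=> _ _ _ _ l1_neq_l2 v W W_sub; rewrite tens11 => W1.
exact: Gsub_all W_sub l1_neq_l2 W1 v.
Qed.
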